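(* For every real $n\times p$ matrix $X$ with nonzero columns, every $S\subset\{1,\dots,p\}$ and every $s>0$, \[ \phi(S)^2\ge\bar\phi(1)^2-15|S|\,\mathrm{mc}(X),\qquad \bar\phi(s)^2\ge\tilde\phi(s)^2\ge\bar\phi(1)^2-s\,\mathrm{mc}(X). \]
   Context: $X_{\cdot,i}$ is the $i$th column, $\|X\|=\max_i\|X_{\cdot,i}\|_2$, $S_\beta=\{i:\beta_i\ne0\}$, $\beta_S=(\beta_i)_{i\in S}$. $\phi(S)=\inf\{\|X\beta\|_2|S|^{1/2}/(\|X\|\|\beta_S\|_1):\beta\in\mathbb R^p,\|\beta_{S^c}\|_1\le7\|\beta_S\|_1,\beta_S\ne0\}$; $\bar\phi(s)=\inf\{\|X\beta\|_2|S_\beta|^{1/2}/(\|X\|\|\beta\|_1):0\ne|S_\beta|\le s\}$; $\tilde\phi(s)=\inf\{\|X\beta\|_2/(\|X\|\|\beta\|_2):0\ne|S_\beta|\le s\}$; $\mathrm{mc}(X)=\max_{i\ne j}|\langle X_{\cdot,i},X_{\cdot,j}\rangle|/(\|X_{\cdot,i}\|_2\|X_{\cdot,j}\|_2)$. *)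

From HB Require Import structures.
From mathcomp Require Import all_boot all_order all_algebra.
From mathcomp Require Import all_classical all_reals ereal.
Set Implicit Arguments. Unset Strict Implicit. Unset Printing Implicit Defensive.
Import Order.TTheory GRing.Theory Num.Theory.
Local Open Scope ring_scope.
Local Open Scope classical_set_scope.

Section Defs.
Variable R : realType.

Definition l2norm (m : nat) (v : 'cV[R]_m) : R := Num.sqrt (\sum_i v i 0 ^+ 2).

Definition l1on (p : nat) (A : {set 'I_p}) (b : 'cV[R]_p) : R :=
  \sum_(i in A) `|b i 0|.

Definition supp (p : nat) (b : 'cV[R]_p) : {set 'I_p} := [set i | b i 0 != 0].

Definition matnorm (n p : nat) (X : 'M[R]_(n, p)) : R :=
  \big[Num.max/0]_(i < p) l2norm (col i X).

(* mutual coherence (max over the empty set taken as 0) *)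
Definition mc (n p : nat) (X : 'M[R]_(n, p)) : R :=
  \big[Num.max/0]_(i < p) \big[Num.max/0]_(j < p | i != j)
     (`|((col i X)^T *m col j X) 0 0| / (l2norm (col i X) * l2norm (col j X))).

(* compatibility constant phi(S), as an extended real (inf of empty set = +oo) *)
Definition phiS (n p : nat) (X : 'M[R]_(n, p)) (S : {set 'I_p}) : \bar R :=
  ereal_inf [set (l2norm (X *m b) * Num.sqrt (#|S|%:R) / (matnorm X * l1on S b))%:E
            | b in [set b : 'cV[R]_p | l1on (~: S) b <= 7 * l1on S b
                                       /\ [exists i in S, b i 0 != 0]]].

Definition phibar (n p : nat) (X : 'M[R]_(n, p)) (s : R) : \bar R :=
  ereal_inf [set (l2norm (X *m b) * Num.sqrt (#|supp b|%:R) / (matnorm X * l1on [set: 'I_p]%SET b))%:E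
            | b in [set b : 'cV[R]_p | (0 < #|supp b|)%N /\ #|supp b|%:R <= s]].

Definition phitilde (n p : nat) (X : 'M[R]_(n, p)) (s : R) : \bar R :=
  ereal_inf [set (l2norm (X *m b) / (matnorm X * l2norm b))%:E
            | b in [set b : 'cV[R]_p | (0 < #|supp b|)%N /\ #|supp b|%:R <= s]].

End Defs.

From HB Require Import structures.
From mathcomp Require Import all_boot all_order all_algebra.
From mathcomp Require Import all_classical all_reals ereal.
From mathcomp Require Import ring lra.
Import Order.TTheory GRing.Theory Num.Theory.
Local Open Scope ring_scope.
Set Implicit Arguments. Unset Strict Implicit. Unset Printing Implicit Defensive.

(* Expand |Xb|^2 = sum_(i,j) b_i b_j <X_i, X_j>.  Testing phibar(1) on unit
   vectors gives phibar(1) ||X|| <= ||X_i||, so the diagonal terms are at least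
   phibar(1)^2 ||X||^2 b_i^2, while each off-diagonal term is at least
   -mc(X) ||X||^2 |b_i| |b_j|.  For phi(S) split b = b_S + b_(S^c): the cross
   term <X b_S, X b_(S^c)> has no diagonal part and, by the cone condition, is at
   least -7 mc(X) ||X||^2 ||b_S||_1^2, whence the constant 1 + 2 * 7 = 15; then
   Cauchy-Schwarz gives ||b_S||_1^2 <= |S| ||b_S||_2^2.  For phitilde(s) the
   off-diagonal part is controlled by ||b||_1^2 <= |S_b| ||b||_2^2, and the same
   inequality yields phitilde(s) <= phibar(s). *)

Section Sums.
Variables (R : realType) (I : finType).

Lemma sqr_sum_le_card_sum_sqr (A : {set I}) (x : I -> R) :
  (\sum_(i in A) x i) ^+ 2 <= #|A|%:R * \sum_(i in A) x i ^+ 2.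
Proof.
set T := \sum_(i in A) x i; set Q := \sum_(i in A) x i ^+ 2.
have sum_sqr_diff :
    \sum_(i in A) \sum_(j in A) (x i - x j) ^+ 2 = 2 * (#|A|%:R * Q - T ^+ 2).
  transitivity (\sum_(i in A) (#|A|%:R * x i ^+ 2 + Q - 2 * x i * T)).
    apply: eq_bigr => i _.
    rewrite (eq_bigr (fun j => x i ^+ 2 + x j ^+ 2 - 2 * x i * x j)); last first.
      by move=> j _; ring.
    rewrite !big_split /= sumr_const sumrN /T mulr_sumr.
    by congr (_ + _ - _); rewrite mulr_natl.
  rewrite !big_split /= sumrN -mulr_sumr -mulr_suml -mulr_sumr sumr_const -mulr_natl.
  by rewrite -/Q -/T; ring.
have : 0 <= \sum_(i in A) \sum_(j in A) (x i - x j) ^+ 2.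
  by apply: sumr_ge0 => i _; apply: sumr_ge0 => j _; exact: sqr_ge0.
by rewrite sum_sqr_diff pmulr_rge0 // subr_ge0.
Qed.

Lemma sqr_sum_norm_le_card_sum_sqr (A : {set I}) (x : I -> R) :
  (\sum_(i in A) `|x i|) ^+ 2 <= #|A|%:R * \sum_(i in A) x i ^+ 2.
Proof.
rewrite -(eq_bigr _ (fun i _ => real_normK (num_real (x i)))).
exact: sqr_sum_le_card_sum_sqr.
Qed.

End Sums.

Section Vectors.
Variables (R : realType) (m : nat).
Implicit Types (u v b : 'cV[R]_m) (A : {set 'I_m}).

Definition dotc u v : R := (u^T *m v) 0 0.

Lemma dotcE u v : dotc u v = \sum_i u i 0 * v i 0.
Proof. by rewrite /dotc mxE; apply: eq_bigr => i _; rewrite mxE. Qed.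

Lemma dotcDD u v :
  dotc (u + v) (u + v) = dotc u u + 2 * dotc u v + dotc v v.
Proof.
rewrite !dotcE mulr_sumr -!big_split /=.
by apply: eq_bigr => i _; rewrite !mxE; ring.
Qed.

Lemma sqr_l2norm v : l2norm v ^+ 2 = \sum_i v i 0 ^+ 2.
Proof. by rewrite sqr_sqrtr // sumr_ge0 // => i _; exact: sqr_ge0. Qed.

Lemma sqr_l2normE v : l2norm v ^+ 2 = dotc v v.
Proof. by rewrite sqr_l2norm dotcE; apply: eq_bigr => i _; rewrite expr2. Qed.

Lemma l2norm_ge0 v : 0 <= l2norm v.
Proof. exact: sqrtr_ge0. Qed.

Lemma l2norm_gt0 v : v != 0 -> 0 < l2norm v.
Proof.
move=> v_neq0; rewrite sqrtr_gt0 lt_def sumr_ge0 ?andbT => [|i _]; last exact: sqr_ge0.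
apply: contra v_neq0; rewrite psumr_eq0 => [|i _]; last exact: sqr_ge0.
move/allP => v0; apply/eqP/matrixP => i j; rewrite (ord1 j) mxE.
by move: (v0 i (mem_index_enum _)); rewrite implyTb sqrf_eq0 => /eqP.
Qed.

Lemma supp_neq0 v : (0 < #|supp v|)%N -> v != 0.
Proof.
case/card_gt0P => i; rewrite inE; apply: contra => /eqP ->.
by rewrite mxE.
Qed.

Lemma l1on_setT v : l1on [set: 'I_m] v = \sum_i `|v i 0|.
Proof. by apply: eq_bigl => i; rewrite inE. Qed.

Lemma l1on_ge0 A v : 0 <= l1on A v.
Proof. by apply: sumr_ge0 => i _; exact: normr_ge0. Qed.

Lemma l1on_gt0 A v i : i \in A -> v i 0 != 0 -> 0 < l1on A v.
Proof.
move=> iA vi; rewrite /l1on (bigD1 i) //=.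
by rewrite ltr_pwDl ?normr_gt0 // sumr_ge0.
Qed.

Lemma sum_supp v (F : 'I_m -> R) :
  (forall i, v i 0 = 0 -> F i = 0) -> \sum_i F i = \sum_(i in supp v) F i.
Proof.
move=> F0; rewrite [RHS]big_mkcond /=; apply: eq_bigr => i _.
by rewrite inE; case: eqP => // /F0.
Qed.

Lemma sqr_l1_le_card_supp v :
  (\sum_i `|v i 0|) ^+ 2 <= #|supp v|%:R * \sum_i v i 0 ^+ 2.
Proof.
rewrite (@sum_supp v (fun i => `|v i 0|)) => [|i ->]; last exact: normr0.
rewrite (@sum_supp v (fun i => v i 0 ^+ 2)) => [|i ->]; last exact: expr0n.
exact: sqr_sum_norm_le_card_sum_sqr.
Qed.

Lemma l1_le_sqrt_card_supp_l2 v :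
  \sum_i `|v i 0| <= Num.sqrt #|supp v|%:R * l2norm v.
Proof.
rewrite -sqrtrM ?ler0n // -(ger0_norm (sumr_ge0 _ _)) => [|i _]; last exact: normr_ge0.
rewrite -sqrtr_sqr ler_sqrt ?sqr_l1_le_card_supp // mulr_ge0 ?sumr_ge0 // => i _.
exact: sqr_ge0.
Qed.

End Vectors.

Definition restr (R : realType) m (A : {set 'I_m}) (b : 'cV[R]_m) : 'cV[R]_m :=
  \col_i (if i \in A then b i 0 else 0).

Section Restriction.
Variables (R : realType) (m : nat) (A : {set 'I_m}) (b : 'cV[R]_m).

Lemma restr_split : b = restr A b + restr (~: A) b.
Proof.
apply/matrixP => i j; rewrite (ord1 j) !mxE inE.
by case: (i \in A); rewrite ?addr0 ?add0r.
Qed.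

Lemma restr_disjoint i : restr A b i 0 * restr (~: A) b i 0 = 0.
Proof. by rewrite !mxE inE; case: (i \in A); rewrite ?mulr0 ?mul0r. Qed.

Lemma l1_restr : \sum_i `|restr A b i 0| = l1on A b.
Proof.
rewrite /l1on [RHS]big_mkcond; apply: eq_bigr => i _.
by rewrite mxE; case: ifP => // _; exact: normr0.
Qed.

Lemma sqr_l2_restr : \sum_i restr A b i 0 ^+ 2 = \sum_(i in A) b i 0 ^+ 2.
Proof.
rewrite [RHS]big_mkcond; apply: eq_bigr => i _.
by rewrite mxE; case: ifP => // _; exact: expr0n.
Qed.

End Restriction.

Section Matrix.
Variables (R : realType) (n p : nat) (X : 'M[R]_(n, p)).
Hypothesis Xcol : forall i, col i X != 0.
Local Notation mu := (mc X).
Local Notation M := (matnorm X).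

Lemma dotc_mulmx (u v : 'cV[R]_p) :
  dotc (X *m u) (X *m v) = \sum_i \sum_j u i 0 * v j 0 * dotc (col i X) (col j X).
Proof.
rewrite dotcE.
transitivity (\sum_k \sum_i \sum_j u i 0 * v j 0 * (X k i * X k j)).
  apply: eq_bigr => k _; rewrite !mxE mulr_suml; apply: eq_bigr => i _.
  by rewrite mulr_sumr; apply: eq_bigr => j _; ring.
rewrite exchange_big; apply: eq_bigr => i _; rewrite exchange_big.
by apply: eq_bigr => j _; rewrite dotcE mulr_sumr; apply: eq_bigr => k _; rewrite !mxE.
Qed.

Lemma l2norm_col_le_matnorm i : l2norm (col i X) <= M.
Proof. exact: (le_bigmax 0 (fun i => l2norm (col i X)) i). Qed.

Lemma matnorm_ge0 : 0 <= M.
Proof. exact: bigmax_ge_id. Qed.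

Lemma mc_ge0 : 0 <= mu.
Proof. exact: bigmax_ge_id. Qed.

Lemma dotc_col_le_mc i j : i != j ->
  `|dotc (col i X) (col j X)| <= mu * (l2norm (col i X) * l2norm (col j X)).
Proof.
move=> ij; rewrite -ler_pdivrMr ?mulr_gt0 ?l2norm_gt0 //.
apply: le_trans (le_bigmax 0 _ i).
exact: (le_bigmax_cond 0 (P := fun j => i != j)
   (fun j => `|dotc (col i X) (col j X)| / (l2norm (col i X) * l2norm (col j X)))).
Qed.

Lemma dotc_col_le_mc_matnorm i j : i != j ->
  `|dotc (col i X) (col j X)| <= mu * M ^+ 2.
Proof.
move/dotc_col_le_mc/le_trans; apply; rewrite expr2; apply: ler_wpM2l; first exact: mc_ge0.
by rewrite ler_pM ?l2norm_ge0 ?l2norm_col_le_matnorm.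
Qed.

Lemma dotc_mulmx_ge (u v : 'cV[R]_p) :
  \sum_i u i 0 * v i 0 * l2norm (col i X) ^+ 2
    - mu * M ^+ 2 * ((\sum_i `|u i 0|) * (\sum_j `|v j 0|) - \sum_i `|u i 0 * v i 0|)
  <= dotc (X *m u) (X *m v).
Proof.
have offdiag : (\sum_i `|u i 0|) * (\sum_j `|v j 0|) - \sum_i `|u i 0 * v i 0|
    = \sum_i \sum_(j | j != i) `|u i 0| * `|v j 0|.
  rewrite mulr_suml -sumrB; apply: eq_bigr => i _.
  by rewrite mulr_sumr (bigD1 i) //= normrM addrAC subrr add0r.
rewrite offdiag mulr_sumr -sumrB dotc_mulmx; apply: ler_sum => i _.
rewrite [leRHS](bigD1 i) //= sqr_l2normE lerD2l mulr_sumr -sumrN.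
apply: ler_sum => j ji; rewrite lerNl.
apply: le_trans (ler_norm _) _; rewrite normrN mulrC !normrM.
by apply: ler_wpM2r; rewrite ?mulr_ge0 // dotc_col_le_mc_matnorm // eq_sym.
Qed.

Lemma sqr_l2norm_mulmx_ge (c : R) (b : 'cV[R]_p) :
  0 <= c -> (forall i, c <= l2norm (col i X)) ->
  c ^+ 2 * \sum_i b i 0 ^+ 2 - mu * M ^+ 2 * ((\sum_i `|b i 0|) ^+ 2 - \sum_i b i 0 ^+ 2)
  <= l2norm (X *m b) ^+ 2.
Proof.
move=> c0 hc; rewrite sqr_l2normE; apply: le_trans (dotc_mulmx_ge b b).
have -> : \sum_i `|b i 0 * b i 0| = \sum_i b i 0 ^+ 2.
  by apply: eq_bigr => i _; rewrite -expr2 normrX real_normK ?num_real.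
rewrite -expr2 lerD2r mulr_sumr; apply: ler_sum => i _.
rewrite [leRHS]mulrC -expr2; apply: ler_wpM2r; first exact: sqr_ge0.
by rewrite lerXn2r ?nnegrE // (le_trans c0 (hc i)).
Qed.

Lemma dotc_mulmx_disjoint_ge (u v : 'cV[R]_p) :
  (forall i, u i 0 * v i 0 = 0) ->
  - (mu * M ^+ 2 * ((\sum_i `|u i 0|) * (\sum_j `|v j 0|))) <= dotc (X *m u) (X *m v).
Proof.
move=> disj; apply: le_trans (dotc_mulmx_ge u v).
have -> : \sum_i u i 0 * v i 0 * l2norm (col i X) ^+ 2 = 0.
  by rewrite big1 // => i _; rewrite disj mul0r.
have -> : \sum_i `|u i 0 * v i 0| = 0 by rewrite big1 // => i _; rewrite disj normr0.
by rewrite subr0 sub0r.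
Qed.

Lemma matnorm_gt0 (i : 'I_p) : 0 < M.
Proof. exact: lt_le_trans (l2norm_gt0 (Xcol i)) (l2norm_col_le_matnorm i). Qed.

Lemma compat_ratio_ge (S : {set 'I_p}) (c : R) (b : 'cV[R]_p) :
  0 <= c -> (forall i, c * M <= l2norm (col i X)) ->
  l1on (~: S) b <= 7 * l1on S b -> 0 < l1on S b ->
  c ^+ 2 - 15 * #|S|%:R * mu
  <= (l2norm (X *m b) * Num.sqrt #|S|%:R / (M * l1on S b)) ^+ 2.
Proof.
move=> c0 hc cone a_gt0.
set a := l1on S b; set Qs := \sum_(i in S) b i 0 ^+ 2; set k : R := #|S|%:R.
set u := restr S b; set v := restr (~: S) b.
have [i _] : exists i : 'I_p, i \in S.
  apply/existsP; apply: contraLR a_gt0 => /existsPn noS.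
  by rewrite /a /l1on big_pred0 ?ltxx // => i; exact/negbTE/noS.
have M_gt0 := matnorm_gt0 i.
have mu_ge0 := mc_ge0.
have cM_ge0 : 0 <= c * M by rewrite mulr_ge0 // ltW.
have Qs_ge0 : 0 <= Qs by apply: sumr_ge0 => j _; exact: sqr_ge0.
have cauchy_schwarz : a ^+ 2 <= k * Qs := sqr_sum_norm_le_card_sum_sqr S _.
have Xu_ge : (c * M) ^+ 2 * Qs - mu * M ^+ 2 * a ^+ 2 <= l2norm (X *m u) ^+ 2.
  apply: le_trans (sqr_l2norm_mulmx_ge u cM_ge0 hc); rewrite l1_restr sqr_l2_restr -/a -/Qs.
  rewrite lerD2l lerN2; apply: ler_wpM2l; first by rewrite mulr_ge0 ?sqr_ge0.
  by rewrite lerBlDr lerDl.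
have Xuv_ge : - (7 * mu * M ^+ 2 * a ^+ 2) <= dotc (X *m u) (X *m v).
  apply: le_trans (dotc_mulmx_disjoint_ge (restr_disjoint S b)).
  rewrite !l1_restr -/a lerN2 (_ : 7 * _ * _ * _ = mu * M ^+ 2 * (a * (7 * a))); last by ring.
  apply: ler_wpM2l; first by rewrite mulr_ge0 ?sqr_ge0.
  by apply: ler_wpM2l; first exact: ltW.
have Xb_ge : (c * M) ^+ 2 * Qs - 15 * mu * M ^+ 2 * a ^+ 2 <= l2norm (X *m b) ^+ 2.
  rewrite !sqr_l2normE (restr_split S b) mulmxDr dotcDD -!sqr_l2normE.
  have := sqr_ge0 (l2norm (X *m v)); lra.
rewrite expr_div_n !exprMn (sqr_sqrtr (ler0n _ #|S|)).
rewrite ler_pdivlMr ?mulr_gt0 ?exprn_gt0 //.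
have k_ge0 : 0 <= k by exact: ler0n.
have := ler_wpM2l k_ge0 Xb_ge.
have := ler_wpM2l (mulr_ge0 (sqr_ge0 c) (sqr_ge0 M)) cauchy_schwarz.
rewrite exprMn; lra.
Qed.

Lemma restricted_eigenvalue_ratio_ge (s c : R) (b : 'cV[R]_p) :
  0 <= c -> (forall i, c * M <= l2norm (col i X)) ->
  (0 < #|supp b|)%N -> #|supp b|%:R <= s ->
  c ^+ 2 - s * mu <= (l2norm (X *m b) / (M * l2norm b)) ^+ 2.
Proof.
move=> c0 hc supp_gt0 supp_le.
set Q := \sum_i b i 0 ^+ 2; set k : R := #|supp b|%:R.
have [i _] := card_gt0P supp_gt0.
have M_gt0 := matnorm_gt0 i.
have b_gt0 := l2norm_gt0 (supp_neq0 supp_gt0).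
have muM_ge0 : 0 <= mu * M ^+ 2 by rewrite mulr_ge0 ?mc_ge0 ?sqr_ge0.
have Q_gt0 : 0 < Q by rewrite /Q -sqr_l2norm exprn_gt0.
have Xb_ge := sqr_l2norm_mulmx_ge b (mulr_ge0 c0 (ltW M_gt0)) hc.
rewrite expr_div_n exprMn (sqr_l2norm b) ler_pdivlMr ?mulr_gt0 ?exprn_gt0 //.
have := ler_wpM2l muM_ge0 (sqr_l1_le_card_supp b).
have := ler_wpM2l muM_ge0 (ler_wpM2r (ltW Q_gt0) supp_le).
have := mulr_ge0 muM_ge0 (ltW Q_gt0).
move: Xb_ge; rewrite -/Q -/k exprMn; lra.
Qed.

Lemma restricted_eigenvalue_le_l1_ratio (b : 'cV[R]_p) : (0 < #|supp b|)%N ->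
  l2norm (X *m b) / (M * l2norm b)
  <= l2norm (X *m b) * Num.sqrt #|supp b|%:R / (M * l1on [set: 'I_p] b).
Proof.
move=> supp_gt0; have [i bi] := card_gt0P supp_gt0; rewrite inE in bi.
have b_gt0 := l2norm_gt0 (supp_neq0 supp_gt0).
have l1_gt0 : 0 < l1on [set: 'I_p] b by apply: l1on_gt0 bi; rewrite inE.
have -> : l2norm (X *m b) / (M * l2norm b) = l2norm (X *m b) / M * (l2norm b)^-1.
  by rewrite invfM mulrA.
have -> : l2norm (X *m b) * Num.sqrt #|supp b|%:R / (M * l1on [set: 'I_p] b)
    = l2norm (X *m b) / M * (Num.sqrt #|supp b|%:R / l1on [set: 'I_p] b).
  by rewrite invfM; ring.
apply: ler_wpM2l; first by rewrite divr_ge0 ?l2norm_ge0 ?matnorm_ge0.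
rewrite ler_pdivlMr // mulrC ler_pdivrMr //.
by rewrite l1on_setT l1_le_sqrt_card_supp_l2.
Qed.

End Matrix.

Section InfSquares.
Variables (R : realType) (T : Type) (P : set T).
Local Open Scope classical_set_scope.
Local Open Scope ereal_scope.

Lemma ereal_inf_ge0 (g : T -> R) :
  (forall b, P b -> (0 <= g b)%R) -> 0 <= ereal_inf [set (g b)%:E | b in P].
Proof. by move=> g_ge0; apply/ereal_infP => _ [b Pb <-]; rewrite lee_fin g_ge0. Qed.

Lemma le_ereal_inf_sqr (g : T -> R) (L : \bar R) :
  (forall b, P b -> (0 <= g b)%R) -> (forall b, P b -> L <= (g b ^+ 2)%:E) ->
  L <= ereal_inf [set (g b)%:E | b in P] * ereal_inf [set (g b)%:E | b in P].
Proof.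
move=> g_ge0 Lg; have := ereal_inf_ge0 g_ge0.
set m := ereal_inf _ => m_ge0.
case: L Lg => [l| |] Lg; last exact: leNye.
- have [l_le0|l_gt0] := leP l 0%R.
    by apply: le_trans (mule_ge0 m_ge0 m_ge0); rewrite lee_fin.
  have sqrt_le : (Num.sqrt l)%:E <= m.
    apply/ereal_infP => _ [b Pb <-]; rewrite lee_fin -(ger0_norm (g_ge0 b Pb)).
    by rewrite -sqrtr_sqr ler_sqrt ?sqr_ge0 // -lee_fin Lg.
  have sqrt_ge0 : 0 <= (Num.sqrt l)%:E by rewrite lee_fin sqrtr_ge0.
  apply: le_trans (lee_pmul sqrt_ge0 sqrt_ge0 sqrt_le sqrt_le).
  by rewrite -EFinM lee_fin -expr2 sqr_sqrtr // ltW.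
- suff -> : m = +oo by rewrite mulyy.
  rewrite /m (_ : [set _ | b in P] = set0) ?ereal_inf0 //.
  by apply/seteqP; split => // x [b Pb _]; have := Lg b Pb; rewrite leye_eq.
Qed.

Lemma ereal_inf_sqr_le (g1 g2 : T -> R) :
  (forall b, P b -> (0 <= g1 b)%R) -> (forall b, P b -> (g1 b <= g2 b)%R) ->
  ereal_inf [set (g1 b)%:E | b in P] * ereal_inf [set (g1 b)%:E | b in P]
  <= ereal_inf [set (g2 b)%:E | b in P] * ereal_inf [set (g2 b)%:E | b in P].
Proof.
move=> g1_ge0 g12; have m_ge0 := ereal_inf_ge0 g1_ge0.
suff inf_le : ereal_inf [set (g1 b)%:E | b in P] <= ereal_inf [set (g2 b)%:E | b in P].
  exact: lee_pmul.
apply/ereal_infP => _ [b Pb <-]; apply: le_trans (ereal_inf_lbound _) _.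
  by exists b.
by rewrite lee_fin g12.
Qed.

End InfSquares.

Section PhibarOne.
Variables (R : realType) (n p : nat) (X : 'M[R]_(n, p)).
Hypothesis Xcol : forall i, col i X != 0.
Local Open Scope ereal_scope.

Lemma supp_delta (i : 'I_p) : supp (delta_mx i 0%R : 'cV[R]_p) = [set i]%SET.
Proof.
apply/setP => j; rewrite !inE mxE eqxx andbT.
by case: (j == i); rewrite ?oner_neq0 ?eqxx.
Qed.

Lemma phibar1_le_col i : phibar X 1 <= (l2norm (col i X) / matnorm X)%:E.
Proof.
apply: ereal_inf_lbound; exists (delta_mx i 0%R); first by rewrite /= supp_delta cards1.
rewrite supp_delta cards1 sqrtr1 mulr1 -colE l1on_setT (bigD1 i) //= big1 => [|j ji].
  by rewrite mxE !eqxx normr1 addr0 mulr1.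
by rewrite mxE (negbTE ji) normr0.
Qed.

Lemma phibar1_sqr_le (K y : R) (i : 'I_p) :
  (forall c, (0 <= c)%R -> (forall j, (c * matnorm X <= l2norm (col j X))%R) ->
     (c ^+ 2 - K <= y)%R) ->
  phibar X 1 * phibar X 1 - K%:E <= y%:E.
Proof.
move=> Hc; have M_gt0 := matnorm_gt0 Xcol i.
have phibar_ge0 : 0 <= phibar X 1.
  apply: ereal_inf_ge0 => b _.
  by rewrite divr_ge0 ?mulr_ge0 ?l2norm_ge0 ?sqrtr_ge0 ?matnorm_ge0 ?l1on_ge0.
have phibar_le := phibar1_le_col i.
case E : (phibar X 1) phibar_ge0 phibar_le => [c| //|//]; rewrite !lee_fin => c_ge0 _.
rewrite -expr2; apply: Hc => // j.
by rewrite -ler_pdivlMr // -lee_fin -E phibar1_le_col.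
Qed.

End PhibarOne.

Theorem lemma1 (R : realType) (n p : nat) (X : 'M[R]_(n, p))
    (Xcol : forall i : 'I_p, col i X != 0)
    (S : {set 'I_p}) (s : R) (s_gt0 : 0 < s) :
  ((phibar X 1 * phibar X 1 - (15 * #|S|%:R * mc X)%:E
      <= phiS X S * phiS X S)%E)
  /\ ((phitilde X s * phitilde X s <= phibar X s * phibar X s)%E)
  /\ ((phibar X 1 * phibar X 1 - (s * mc X)%:E
      <= phitilde X s * phitilde X s)%E).
Proof.
split; [|split].
- apply: le_ereal_inf_sqr => [b _|b [cone /existsP[i /andP[iS bi]]]].
    by rewrite divr_ge0 ?mulr_ge0 ?l2norm_ge0 ?sqrtr_ge0 ?matnorm_ge0 ?l1on_ge0.
  apply: (phibar1_sqr_le Xcol i) => c c_ge0 hc.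
  exact: compat_ratio_ge (l1on_gt0 iS bi).
- apply: ereal_inf_sqr_le => b [supp_gt0 _].
    by rewrite divr_ge0 ?mulr_ge0 ?l2norm_ge0 ?matnorm_ge0.
  exact: restricted_eigenvalue_le_l1_ratio.
- apply: le_ereal_inf_sqr => [b _|b [supp_gt0 supp_le]].
    by rewrite divr_ge0 ?mulr_ge0 ?l2norm_ge0 ?matnorm_ge0.
  have [i _] := card_gt0P supp_gt0.
  apply: (phibar1_sqr_le Xcol i) => c c_ge0 hc.
  exact: restricted_eigenvalue_ratio_ge.
Qed.
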